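(* Let $\mathcal{T}$ be a planar triangulation, $m\in\mathbb{Z}_{\ge0}$, $r\in\mathbb{Z}_{\ge-1}$, and $\mathbf{r}$ a smoothness distribution with values in $\{r,-1\}$ on interior edges. Let $\sigma$ be a face bounded by interior edges $\tau_1,\tau_2,\tau_3$ with $\mathbf r(\tau_i)=r$, let $\gamma_i=\tau_i\cap\tau_{i+1}$ (indices cyclic in $1,2,3$) be interior vertices with $\mathbf r(\tau)\ne-1$ for every edge $\tau$ incident on any $\gamma_i$, and let $\ell_i$ be an affine-linear form vanishing on $\tau_i$. Let $$\phi:\bigoplus_{i=1}^3{\mathcal{P}}_m/\langle\ell_i^{r+1}\rangle\longrightarrow\bigoplus_{i=1}^3{\mathcal{P}}_m/\mathfrak{J}^{\mathbf r}_{\gamma_i},\qquad (a_1,a_2,a_3)\mapsto(-a_1+a_2,\,-a_2+a_3,\,a_1-a_3),$$ and let $\mathbf s$ agree with $\mathbf r$ except that $\mathbf s(\tau_i)=-1$ for $i=1,2,3$. Then the cokernel of $\phi$, and hence $H_0(\mathcal{I}^{\mathbf s}/\mathcal{I}^{\mathbf r})$, is isomorphic to ${\mathcal{P}}_m/(\mathfrak{J}^{\mathbf r}_{\gamma_1}+\mathfrak{J}^{\mathbf r}_{\gamma_2}+\mathfrak{J}^{\mathbf r}_{\gamma_3})$.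
   Context: $\mathcal{T}$ is a finite planar triangulation of a closed polygonal region $\Omega\subset\mathbb{R}^2$ (possibly not simply connected). An edge or vertex is interior if it is not contained in $\partial\Omega$; $\mathcal{T}^\circ_1,\mathcal{T}^\circ_0$ denote interior edges and vertices. ${\mathcal{P}}_m$ is the space of real bivariate polynomials of total degree at most $m$; $\langle f_1,\dots,f_k\rangle$ denotes the subspace of ${\mathcal{P}}_m$ of all polynomial combinations $\sum g_if_i$ lying in ${\mathcal{P}}_m$. A smoothness distribution is a map $\mathbf{r}:\mathcal{T}^\circ_1\to\mathbb{Z}_{\ge -1}$. For $\tau\in\mathcal{T}^\circ_1$ with vanishing affine-linear form $\ell_\tau$, $\mathfrak{J}^{\mathbf r}_\tau=\langle \ell_\tau^{\mathbf r(\tau)+1}\rangle$ (equal to ${\mathcal{P}}_m$ if $\mathbf r(\tau)=-1$), and for $\gamma\in\mathcal{T}^\circ_0$, $\mathfrak{J}^{\mathbf r}_\gamma=\sum_{\tau\ni\gamma}\mathfrak{J}^{\mathbf r}_\tau$. $\mathcal{I}^{\mathbf r}$ is the chain complex $0\to\bigoplus_{\tau\in\mathcal{T}^\circ_1}\mathfrak{J}^{\mathbf r}_\tau\to\bigoplus_{\gamma\in\mathcal{T}^\circ_0}\mathfrak{J}^{\mathbf r}_\gamma$ (degrees $2,1,0$), whose nonzero map is the cellular boundary map of $\mathcal{T}$ relative to $\partial\Omega$ (signs $\pm1$ from fixed edge orientations). If $\mathbf s\le\mathbf r$ pointwise then $\mathcal{I}^{\mathbf r}\subseteq\mathcal{I}^{\mathbf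 s}$ and $\mathcal{I}^{\mathbf s}/\mathcal{I}^{\mathbf r}$ is the quotient complex. *)

From HB Require Import structures.
From mathcomp Require Import all_boot all_order all_algebra.
From mathcomp Require Import fingraph.
From mathcomp.multinomials Require Import mpoly.
Set Implicit Arguments. Unset Strict Implicit. Unset Printing Implicit Defensive.
Import Order.TTheory GRing.Theory Num.Theory.
Local Open Scope ring_scope.

(* Linear-algebra vocabulary: subspaces are given as predicates (Prop), *)
(* and an isomorphism between quotients A/B and C/D (B <= A, D <= C)    *)
(* is a linear map f with f(A) <= C, f(B) <= D inducing a bijection     *)
(* A/B -> C/D.                                                          *)
Section LinAlg.
Variable R : fieldType.

Definition lin (U W : lmodType R) (f : U -> W) : Prop :=
  forall (a : R) (x y : U), f (a *: x + y) = a *: f x + f y.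

Definition subsum (U : lmodType R) (A B : U -> Prop) : U -> Prop :=
  fun x => exists a b, A a /\ B b /\ x = a + b.

Definition subimg (U W : lmodType R) (f : U -> W) (A : U -> Prop) : W -> Prop :=
  fun y => exists x, A x /\ y = f x.

Definition quot_iso (U W : lmodType R) (A B : U -> Prop) (C D : W -> Prop)
  : Prop :=
  exists f : U -> W, [/\ lin f,
    (forall a, A a -> C (f a)),
    (forall b, B b -> D (f b)),
    (forall a, A a -> D (f a) -> B a) &
    (forall c, C c -> exists a, A a /\ D (c - f a))].
End LinAlg.

Section Polys.
Variable R : realFieldType.
Local Notation P := {mpoly R[2]}.

(* P_m : polynomials of total degree <= m *)
Definition Pm (m : nat) : P -> Prop := fun p => (msize p <= m.+1)%N.

Definition pgen (m : nat) (f : P) : P -> Prop :=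
  fun p => Pm m p /\ exists g : P, p = g * f.

Definition peval (p : P) (x : 'rV[R]_2) : R := p.@[fun i => x ord0 i].

Definition affine_form (f : P) : Prop :=
  exists a b c : R, f = a%:MP + b *: 'X_ord0 + c *: 'X_(inord 1)
                    /\ (b != 0 \/ c != 0).

Definition lform (p q : 'rV[R]_2) : P :=
  (q ord0 ord0 - p ord0 ord0) *: ('X_(inord 1) - (p ord0 (inord 1))%:MP)
  - (q ord0 (inord 1) - p ord0 (inord 1)) *: ('X_ord0 - (p ord0 ord0)%:MP).
End Polys.

Section Triang.
Variable R : realFieldType.
Variable V : finType.
Variable pt : V -> 'rV[R]_2.
Variable F : {set {set V}}.

Definition conv (S : {set V}) : 'rV[R]_2 -> Prop :=
  fun x => exists w : V -> R,
    [/\ forall v, 0 <= w v, forall v, v \notin S -> w v = 0,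
        \sum_v w v = 1 & x = \sum_v w v *: pt v].

Definition aff_indep (S : {set V}) : Prop :=
  forall w : V -> R, \sum_(v in S) w v = 0 -> \sum_(v in S) w v *: pt v = 0 ->
    forall v, v \in S -> w v = 0.

Definition faces_touch (f g : {set V}) : bool :=
  [&& f \in F, g \in F & f :&: g != set0].

Definition is_triangulation : Prop :=
  [/\ injective pt,
      (forall f, f \in F -> #|f| = 3%N /\ aff_indep f),
      (forall f g, f \in F -> g \in F -> f != g ->
          forall x, conv f x /\ conv g x <-> conv (f :&: g) x),
      (forall v : V, exists2 f, f \in F & v \in f) &
      (* Omega is a region: it is connected *)
      (forall f g, f \in F -> g \in F -> connect faces_touch f g)].

Definition is_edge (e : {set V}) : bool :=
  (#|e| == 2%N) && [exists f in F, e \subset f].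

Definition boundary_edge (e : {set V}) : bool :=
  is_edge e && (#|[set f in F | e \subset f]| == 1%N).

Definition interior_edge (e : {set V}) : bool :=
  is_edge e && ~~ boundary_edge e.

Definition interior_vertex (v : V) : bool :=
  [forall e : {set V}, boundary_edge e ==> (v \notin e)].

Variable src : {set V} -> V.
Definition dst (e : {set V}) : V := odflt (src e) [pick v in e :\ src e].

Definition orientation : Prop := forall e, is_edge e -> src e \in e.

Local Notation P := {mpoly R[2]}.

Definition ledge (e : {set V}) : P := lform (pt (src e)) (pt (dst e)).

(* smoothness distributions are maps {set V} -> int, only their values   *)
(* on interior edges matter.                                             *)
Definition smoothness (r : {set V} -> int) : Prop :=
  forall e, interior_edge e -> (-1 <= r e)%R.

Definition Jedge (m : nat) (r : {set V} -> int) (e : {set V}) : P -> Prop :=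
  pgen m (ledge e ^+ absz (r e + 1)%R).

Definition Jvert (m : nat) (r : {set V} -> int) (v : V) : P -> Prop :=
  fun p => exists g : {set V} -> P,
    [/\ forall e, interior_edge e -> v \in e -> Jedge m r e (g e),
        forall e, ~~ (interior_edge e && (v \in e)) -> g e = 0 &
        p = \sum_e g e].

(* the chain groups of I^r (as subspaces of the full coordinate spaces)  *)
Definition chains1 (m : nat) (r : {set V} -> int) : {ffun {set V} -> P} -> Prop :=
  fun c => forall e, if interior_edge e then Jedge m r e (c e) else c e = 0.

Definition chains0 (m : nat) (r : {set V} -> int) : {ffun V -> P} -> Prop :=
  fun c => forall v, if interior_vertex v then Jvert m r v (c v) else c v = 0.

(* cellular boundary map relative to the boundary of Omega *)
Definition bdry (c : {ffun {set V} -> P}) : {ffun V -> P} :=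
  [ffun v => if interior_vertex v then
     \sum_(e | interior_edge e)
        ((if v == dst e then c e else 0) - (if v == src e then c e else 0))
   else 0].

(* H_0 of the quotient complex I^s / I^r :                               *)
(*   (I^s)_0 / ((I^r)_0 + bdry (I^s)_1)                                  *)
Definition H0_quot_num (m : nat) (s : {set V} -> int) := chains0 m s.
Definition H0_quot_den (m : nat) (r s : {set V} -> int) :=
  subsum (chains0 m r) (subimg bdry (chains1 m s)).
End Triang.

Definition drop_edges (V : finType) (r : {set V} -> int) (t1 t2 t3 : {set V})
  : {set V} -> int :=
  fun e => if (e == t1) || (e == t2) || (e == t3) then (-1)%R else r e.

Definition phi_map (R : realFieldType) (x : {mpoly R[2]} * {mpoly R[2]} * {mpoly R[2]})
  : {mpoly R[2]} * {mpoly R[2]} * {mpoly R[2]} :=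
  (- x.1.1 + x.1.2, - x.1.2 + x.2, x.1.1 - x.2).

Definition triple (U : Type) (A1 A2 A3 : U -> Prop) : U * U * U -> Prop :=
  fun x => [/\ A1 x.1.1, A2 x.1.2 & A3 x.2].

From HB Require Import structures.
From mathcomp Require Import all_boot all_order all_algebra.
From mathcomp.multinomials Require Import mpoly.
From mathcomp Require Import ring.
Import Order.TTheory GRing.Theory Num.Theory.
Local Open Scope ring_scope.

Set Implicit Arguments. Unset Strict Implicit. Unset Printing Implicit Defensive.

(* An affine form vanishing on an edge is a multiple of the edge form, so
   <l_i^(r+1)> lies in the edge ideal of tau_i and hence in the vertex ideals at
   both ends of tau_i; this makes phi well defined.  Both quotients are computed
   by a sum map.  On P_m^3 the sum of the coordinates has kernel exactly the
   image of phi.  On 0-chains the corner sum c(g1) + c(g2) + c(g3) kills the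
   boundaries of the sides tau_i (where I^s is all of P_m) and sends the other
   boundaries into the vertex ideals; conversely a 0-chain whose corner sum lies
   in J_1 + J_2 + J_3 is moved into I^r_0 by a boundary supported on tau_1 and
   tau_2. *)

Definition subspace (R : fieldType) (U : lmodType R) (A : U -> Prop) : Prop :=
  A 0 /\ forall a x y, A x -> A y -> A (a *: x + y).

Section Subspace.
Variables (R : fieldType) (U : lmodType R) (A B C : U -> Prop).
Hypothesis sA : subspace A.

Lemma subspace0 : A 0.
Proof. by case: sA. Qed.

Lemma subspaceD x y : A x -> A y -> A (x + y).
Proof. by case: sA => _ hA hx hy; rewrite -[x]scale1r; apply: hA. Qed.

Lemma subspaceN x : A x -> A (- x).
Proof.
by case: sA => A0 hA hx; rewrite -[- x]addr0 -scaleN1r; apply: hA.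
Qed.

Lemma subspaceB x y : A x -> A y -> A (x - y).
Proof. by move=> hx hy; apply: subspaceD hx (subspaceN hy). Qed.

Lemma subspace_sum (I : Type) (s : seq I) (P : pred I) (f : I -> U) :
  (forall i, P i -> A (f i)) -> A (\sum_(i <- s | P i) f i).
Proof. exact: (big_ind A subspace0 subspaceD). Qed.

Lemma subspace_subsum : subspace B -> subspace (subsum A B).
Proof.
case: sA => A0 hA [B0 hB]; split; first by exists 0, 0; rewrite addr0.
move=> a _ _ [x [y [hx [hy ->]]]] [x' [y' [hx' [hy' ->]]]].
exists (a *: x + x'), (a *: y + y'); split; first exact: hA.
by split; [exact: hB | rewrite scalerDr addrACA].
Qed.

Lemma subsum3E u : subsum (subsum A B) C u <->
  exists x y z, [/\ A x, B y, C z & u = x + y + z].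
Proof.
split; first by move=> [_ [z [[x [y [hx [hy ->]]]] [hz ->]]]]; exists x, y, z.
by move=> [x [y [z [hx hy hz ->]]]]; exists (x + y), z; split => //; exists x, y.
Qed.
End Subspace.

Section PolynomialSubspaces.
Variables (R : realFieldType) (m : nat).
Local Notation P := {mpoly R[2]}.

Lemma Pm_subspace : subspace (Pm m : P -> Prop).
Proof.
split; first by rewrite /Pm msize0.
move=> a p q hp hq; apply: leq_trans (msizeD_le _ _) _.
by rewrite geq_max hq (leq_trans (msizeZ_le _ _) hp).
Qed.

Lemma pgen_Pm (f p : P) : pgen m f p -> Pm m p.
Proof. by case. Qed.

Lemma pgen_subspace (f : P) : subspace (pgen m f).
Proof.
split; first by split; [exact: subspace0 Pm_subspace | exists 0; rewrite mul0r].
move=> a p q [hp [g ep]] [hq [h eq]]; split; first by case: Pm_subspace => _; apply.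
by exists (a *: g + h); rewrite ep eq mulrDl scalerAl.
Qed.

Lemma pgen1 (p : P) : Pm m p -> pgen m 1 p.
Proof. by split => //; exists p; rewrite mulr1. Qed.

Lemma pgenMl (h f p : P) : pgen m (h * f) p -> pgen m f p.
Proof. by move=> [hp [g ep]]; split => //; exists (g * h); rewrite ep mulrA. Qed.
End PolynomialSubspaces.

Lemma orthogonal2_multiple (R : fieldType) (u w b c : R) :
  u != 0 \/ w != 0 -> b * u + c * w = 0 -> exists k, b = - (k * w) /\ c = k * u.
Proof.
case=> [u0|w0] /eqP; rewrite addr_eq0 => /eqP buw.
  exists (c / u); split; last by field.
  by rewrite -[b](mulfK u0) buw; field.
exists (- b / w); split; first by field.
by rewrite -[c](mulfK w0) -[c * w]opprK -buw; field.
Qed.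

Section AffineForms.
Variable R : realFieldType.
Local Notation P := {mpoly R[2]}.

Lemma peval_affine (a b c : R) (x : 'rV[R]_2) :
  peval (a%:MP + b *: 'X_ord0 + c *: 'X_(inord 1) : P) x
  = a + b * x ord0 ord0 + c * x ord0 (inord 1).
Proof. by rewrite /peval !mevalD !mevalZ mevalC !mevalXU. Qed.

Lemma row2_neq (p q : 'rV[R]_2) : p != q ->
  q ord0 ord0 - p ord0 ord0 != 0 \/ q ord0 (inord 1) - p ord0 (inord 1) != 0.
Proof.
move=> pq; apply/orP; rewrite -negb_and; apply: contra pq.
rewrite !subr_eq0 => /andP[/eqP e0 /eqP e1]; apply/eqP/rowP => j.
have [-> | ->] : j = ord0 \/ j = inord 1.
  by case: j => [[|[|//]] hj]; [left | right]; apply: val_inj; rewrite /= ?inordK.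
- by rewrite e0.
- by rewrite e1.
Qed.

Lemma affine_form_lform (p q : 'rV[R]_2) (l : P) : p != q -> affine_form l ->
  peval l p = 0 -> peval l q = 0 -> exists k, l = k *: lform p q.
Proof.
move=> /row2_neq pq [a [b [c [-> _]]]]; rewrite !peval_affine /lform => hp hq.
have /(orthogonal2_multiple pq) [k [hb hc]] :
    b * (q ord0 ord0 - p ord0 ord0) + c * (q ord0 (inord 1) - p ord0 (inord 1)) = 0.
  by rewrite -[RHS]subr0 -{1}hq -hp; ring.
have ha : a = - (b * p ord0 ord0 + c * p ord0 (inord 1)).
  by apply/eqP; rewrite -addr_eq0 addrA hp.
by exists k; rewrite ha hb hc -!mul_mpolyC !(rmorphN, rmorphD, rmorphB, rmorphM) /=; ring.
Qed.
End AffineForms.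

Section Edges.
Variables (V : finType) (src : {set V} -> V).

Lemma dst_edge (e : {set V}) : #|e| = 2%N -> src e \in e ->
  dst src e \in e /\ dst src e != src e.
Proof.
move=> e2 se; rewrite /dst; case: pickP => [v | none] /=.
  by rewrite in_setD1 => /andP[-> ->].
suff h0 : #|e :\ src e| = 0%N by have := cardsD1 (src e) e; rewrite se e2 h0.
by apply: eq_card0 => v; rewrite none.
Qed.

Lemma edge_ends (x y : V) (e : {set V}) : e = [set x; y] -> x != y -> src e \in e ->
  (src e = x /\ dst src e = y) \/ (src e = y /\ dst src e = x).
Proof.
move=> ->{e} xy sxy; have e2 : #|[set x; y]| = 2%N by rewrite cards2 xy.
have [dxy] := dst_edge e2 sxy.
move: sxy dxy; rewrite !inE.
by case/orP=> /eqP->; case/orP=> /eqP->; rewrite ?eqxx //; [left | right].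
Qed.
End Edges.

Lemma triangle_edges (V : finType) (S t1 t2 t3 : {set V}) (g1 g2 g3 : V) :
  #|S| = 3%N -> #|t1| = 2%N -> #|t2| = 2%N -> #|t3| = 2%N ->
  t1 \subset S -> t2 \subset S -> t3 \subset S ->
  t1 :&: t2 = [set g1] -> t2 :&: t3 = [set g2] -> t3 :&: t1 = [set g3] ->
  [/\ t1 = [set g1; g3], t2 = [set g2; g1], t3 = [set g3; g2] &
      [/\ g1 != g3, g2 != g1 & g3 != g2]].
Proof.
move=> S3 c1 c2 c3 s1 s2 s3 e12 e23 e31.
have cover (A B : {set V}) x : #|A| = 2%N -> #|B| = 2%N -> A \subset S -> B \subset S ->
    A :&: B = [set x] -> A :|: B = S.
  move=> cA cB sA sB eAB; apply/eqP; rewrite eqEcard subUset sA sB /=.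
  by rewrite cardsU cA cB eAB cards1 S3.
have E1 : t1 = [set g1; g3].
  by rewrite -(setIidPl s1) -(cover _ _ _ c2 c3 s2 s3 e23) setIUr e12 setIC e31.
have E2 : t2 = [set g2; g1].
  by rewrite -(setIidPl s2) -(cover _ _ _ c3 c1 s3 s1 e31) setIUr e23 setIC e12.
have E3 : t3 = [set g3; g2].
  by rewrite -(setIidPl s3) -(cover _ _ _ c1 c2 s1 s2 e12) setIUr e31 setIC e23.
have neq (x y : V) : #|[set x; y]| = 2%N -> x != y by rewrite cards2; case: (x != y).
by split => //; split; apply: neq; rewrite -?E1 -?E2 -?E3.
Qed.

Section Chains.
Variables (R : realFieldType) (V : finType) (pt : V -> 'rV[R]_2).
Variables (F : {set {set V}}) (src : {set V} -> V) (m : nat).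
Local Notation P := {mpoly R[2]}.

Lemma interior_edge_card (e : {set V}) : interior_edge F e -> #|e| = 2%N.
Proof. by case/andP=> /andP[/eqP]. Qed.

Lemma orientation_src e : orientation F src -> interior_edge F e -> src e \in e.
Proof. by move=> hO /andP[ie _]; apply: hO. Qed.

Lemma Jvert_subspace r v : subspace (Jvert pt F src m r v).
Proof.
split.
  exists (fun=> 0); split => //; last by rewrite big1.
  by move=> e _ _; apply: subspace0 (pgen_subspace _ _).
move=> a _ _ [g [hg g0 ->]] [h [hh h0 ->]]; exists (fun e => a *: g e + h e); split.
- move=> e ie ve; have [_ hJ] := pgen_subspace m (ledge pt src e ^+ absz (r e + 1)).
  by apply: hJ; [apply: hg | apply: hh].
- by move=> e ne; rewrite g0 // h0 // scaler0 addr0.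
- by rewrite scaler_sumr -big_split.
Qed.

Lemma Jedge_Jvert r v e p : interior_edge F e -> v \in e ->
  Jedge pt src m r e p -> Jvert pt F src m r v p.
Proof.
move=> ie ve hp; exists (fun e' => if e' == e then p else 0); split.
- by move=> e' _ _; case: eqP => [-> //|_]; apply: subspace0 (pgen_subspace _ _).
- by move=> e'; case: eqP => [-> | //]; rewrite ie ve.
- by rewrite -big_mkcond big_pred1_eq.
Qed.

Lemma Jvert_Pm r v p : Jvert pt F src m r v p -> Pm m p.
Proof.
move=> [g [hg g0 ->]]; apply: (subspace_sum (Pm_subspace R m)) => e _.
have [/andP[ie ve] | nev] := boolP (interior_edge F e && (v \in e)).
  exact: pgen_Pm (hg _ ie ve).
by rewrite g0 //; apply: subspace0 (Pm_subspace R m).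
Qed.

Lemma chains0_Pm r a v : chains0 pt F src m r a -> Pm m (a v).
Proof.
move/(_ v); case: ifP => _; first exact: Jvert_Pm.
by move=> ->; apply: subspace0 (Pm_subspace R m).
Qed.

Lemma Jvert_ext r r' v p : (forall e, interior_edge F e -> v \in e -> r e = r' e) ->
  Jvert pt F src m r v p -> Jvert pt F src m r' v p.
Proof.
move=> rr' [g [hg g0 ->]]; exists g; split => // e ie ve.
by rewrite /Jedge -rr' //; apply: hg.
Qed.

Lemma Jedge_affine_form r t (l : P) p : injective pt -> orientation F src ->
  interior_edge F t -> affine_form l -> (forall v, v \in t -> peval l (pt v) = 0) ->
  pgen m (l ^+ absz (r t + 1)) p -> Jedge pt src m r t p.
Proof.
move=> pt_inj hO it hl l0; have st := orientation_src hO it.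
have [dt ds] := dst_edge (interior_edge_card it) st.
have pst : pt (src t) != pt (dst src t) by apply: contra ds => /eqP /pt_inj ->.
have [k ->] := affine_form_lform pst hl (l0 _ st) (l0 _ dt).
by rewrite exprZn -mul_mpolyC; apply: pgenMl.
Qed.

Definition bdry_term (v : V) (e : {set V}) (x : P) : P :=
  (if v == dst src e then x else 0) - (if v == src e then x else 0).

Lemma bdryE (c : {ffun {set V} -> P}) v : bdry F src c v =
  if interior_vertex F v then \sum_(e | interior_edge F e) bdry_term v e (c e) else 0.
Proof. by rewrite ffunE. Qed.

Lemma bdryD (c c' : {ffun {set V} -> P}) :
  bdry F src (c + c') = bdry F src c + bdry F src c'.
Proof.
apply/ffunP => v; rewrite [RHS]ffunE !bdryE; case: ifP => _; last by rewrite addr0.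
rewrite -big_split; apply: eq_bigr => e _; rewrite ffunE /bdry_term.
by case: ifP => _; case: ifP => _ /=; ring.
Qed.

Lemma bdry_term_Jvert r v e x : interior_edge F e -> src e \in e ->
  Jedge pt src m r e x -> Jvert pt F src m r v (bdry_term v e x).
Proof.
move=> ie se hx; have [de _] := dst_edge (interior_edge_card ie) se.
have sJ := Jvert_subspace r v.
rewrite /bdry_term; apply: (subspaceB sJ); case: eqP => [-> | _];
  by [apply: Jedge_Jvert hx | apply: subspace0 sJ].
Qed.

Lemma bdry_term_triangle (g1 g2 g3 : V) e x : g1 != g3 -> g2 != g1 -> g3 != g2 ->
  src e \in [set g1; g2; g3] -> dst src e \in [set g1; g2; g3] ->
  bdry_term g1 e x + bdry_term g2 e x + bdry_term g3 e x = 0.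
Proof.
move=> d13 d21 d32.
pose at_corners u := (if g1 == u then x else 0) + (if g2 == u then x else 0)
                     + (if g3 == u then x else 0).
have corner u : u \in [set g1; g2; g3] -> at_corners u = x.
  have d31 : g3 != g1 by rewrite eq_sym.
  have d12 : g1 != g2 by rewrite eq_sym.
  have d23 : g2 != g3 by rewrite eq_sym.
  rewrite !inE -orbA /at_corners => /or3P[] /eqP ->; rewrite eqxx;
  by rewrite !(negbTE d13, negbTE d31, negbTE d12, negbTE d21, negbTE d23, negbTE d32)
     ?addr0 ?add0r.
move=> /corner hs /corner hd.
suff -> : bdry_term g1 e x + bdry_term g2 e x + bdry_term g3 e x =
  at_corners (dst src e) - at_corners (src e) by rewrite hd hs subrr.
by rewrite /bdry_term /at_corners; ring.
Qed.

Definition echain (x y : V) (a : P) : {ffun {set V} -> P} :=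
  [ffun e => if e == [set x; y] then (if dst src e == y then a else - a) else 0].

Lemma bdry_echain x y a v : interior_edge F [set x; y] -> x != y ->
  src [set x; y] \in [set x; y] ->
  bdry F src (echain x y a) v =
  if interior_vertex F v then (if v == y then a else 0) - (if v == x then a else 0)
  else 0.
Proof.
move=> ie xy sxy; rewrite bdryE; case: ifP => // _.
rewrite (bigD1 [set x; y]) //= big1 => [|e /andP[_ /negbTE ne]]; last first.
  by rewrite ffunE ne /bdry_term !if_same subr0.
rewrite addr0 ffunE eqxx /bdry_term.
case: (edge_ends (erefl _) xy sxy) => [[-> ->] | [-> ->]]; first by rewrite eqxx.
by rewrite (negbTE xy); case: ifP => _; case: ifP => _; ring.
Qed.

Lemma chains1_echain r x y a : interior_edge F [set x; y] ->
  Jedge pt src m r [set x; y] a -> chains1 pt F src m r (echain x y a).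
Proof.
move=> ie ha e; rewrite ffunE; case: eqP => [-> | _]; rewrite ?ie.
  by case: ifP => _ //; apply: (subspaceN (pgen_subspace _ _)) ha.
by case: ifP => _ //; apply: subspace0 (pgen_subspace _ _).
Qed.

Lemma chains1D r (c c' : {ffun {set V} -> P}) :
  chains1 pt F src m r c -> chains1 pt F src m r c' ->
  chains1 pt F src m r (c + c').
Proof.
move=> hc hc' e; rewrite ffunE; move: (hc e) (hc' e); case: ifP => _.
  exact: (subspaceD (pgen_subspace _ _)).
by move=> -> ->; rewrite addr0.
Qed.
End Chains.

Lemma coker_phi_iso (R : realFieldType) (A J1 J2 J3 : {mpoly R[2]} -> Prop) :
  subspace A -> subspace J1 -> subspace J2 -> subspace J3 ->
  (forall p, J1 p -> A p) -> (forall p, J2 p -> A p) -> (forall p, J3 p -> A p) ->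
  quot_iso (triple A A A) (subsum (triple J1 J2 J3) (subimg (@phi_map R) (triple A A A)))
    A (subsum (subsum J1 J2) J3).
Proof.
move=> sA sJ1 sJ2 sJ3 A1 A2 A3.
have J0 : subsum (subsum J1 J2) J3 0.
  apply/subsum3E; exists 0, 0, 0; rewrite !addr0.
  by split; [exact: subspace0 sJ1 | exact: subspace0 sJ2 | exact: subspace0 sJ3 |].
exists (fun x => x.1.1 + x.1.2 + x.2); split.
- by move=> k x y /=; rewrite -!mul_mpolyC; ring.
- by move=> x [hx1 hx2 hx3]; do 2?apply: (subspaceD sA).
- move=> _ [j [_ [[hj1 hj2 hj3] [[x [_ ->]] ->]]]].
  by apply/subsum3E; exists j.1.1, j.1.2, j.2; split => //=; rewrite /phi_map /=; ring.
- move=> [[b1 b2] b3] [/= hb1 hb2 hb3] /subsum3E [j1 [j2 [j3 [hj1 hj2 hj3 eb]]]].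
  pose x : {mpoly R[2]} * _ * _ := (0, b1 - j1, b1 - j1 + (b2 - j2)).
  exists (j1, j2, j3), (phi_map x); split => //; split.
    exists x; split => //; split => /=; first exact: subspace0 sA.
      by apply: (subspaceB sA) => //; apply: A1.
    by apply: (subspaceD sA); apply: (subspaceB sA); auto.
  have -> : b3 = j1 + j2 + j3 - b1 - b2 by rewrite -eb; ring.
  by do 2?apply: injective_projections => /=; ring.
- move=> c hc; exists (c, 0, 0); split; first by split => //=; apply: subspace0 sA.
  by rewrite /= !addr0 subrr.
Qed.

Section Triangle.
Variables (R : realFieldType) (V : finType) (pt : V -> 'rV[R]_2).
Variables (F : {set {set V}}) (src : {set V} -> V) (m : nat) (r : {set V} -> int).
Variables (t1 t2 t3 : {set V}) (g1 g2 g3 : V).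
Hypotheses (hO : orientation F src) (hi1 : interior_edge F t1)
  (hi2 : interior_edge F t2) (hi3 : interior_edge F t3).
Hypotheses (E1 : t1 = [set g1; g3]) (E2 : t2 = [set g2; g1]) (E3 : t3 = [set g3; g2]).
Hypotheses (d13 : g1 != g3) (d21 : g2 != g1) (d32 : g3 != g2).
Hypotheses (hv1 : interior_vertex F g1) (hv2 : interior_vertex F g2)
  (hv3 : interior_vertex F g3).
Local Notation P := {mpoly R[2]}.
Local Notation s := (drop_edges r t1 t2 t3).
Local Notation J := (Jvert pt F src m r).
Local Notation corners := (subsum (subsum (J g1) (J g2)) (J g3)).
Local Notation side e := ((e == t1) || (e == t2) || (e == t3)).

Let g1t1 : g1 \in t1. Proof. by rewrite E1 set21. Qed.
Let g3t1 : g3 \in t1. Proof. by rewrite E1 set22. Qed.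
Let g2t2 : g2 \in t2. Proof. by rewrite E2 set21. Qed.
Let g1t2 : g1 \in t2. Proof. by rewrite E2 set22. Qed.
Let g3t3 : g3 \in t3. Proof. by rewrite E3 set21. Qed.
Let g2t3 : g2 \in t3. Proof. by rewrite E3 set22. Qed.
Let d31 : g3 != g1. Proof. by rewrite eq_sym. Qed.
Let d12 : g1 != g2. Proof. by rewrite eq_sym. Qed.
Let d23 : g2 != g3. Proof. by rewrite eq_sym. Qed.

Lemma phi_map_Jvert x : triple (Jedge pt src m r t1) (Jedge pt src m r t2)
  (Jedge pt src m r t3) x -> triple (J g1) (J g2) (J g3) (phi_map x).
Proof.
case: x => [[a1 a2] a3] [/= h1 h2 h3].
have sJ v := Jvert_subspace pt F src m r v.
split => /=.
- apply: (subspaceD (sJ _)); first apply: (subspaceN (sJ _)).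
    exact: Jedge_Jvert hi1 g1t1 h1.
  exact: Jedge_Jvert hi2 g1t2 h2.
- apply: (subspaceD (sJ _)); first apply: (subspaceN (sJ _)).
    exact: Jedge_Jvert hi2 g2t2 h2.
  exact: Jedge_Jvert hi3 g2t3 h3.
- apply: (subspaceB (sJ _)); first exact: Jedge_Jvert hi1 g3t1 h1.
  exact: Jedge_Jvert hi3 g3t3 h3.
Qed.

Let Jedge_side e p : side e -> Pm m p -> Jedge pt src m s e p.
Proof. by move=> se; rewrite /Jedge /drop_edges se addNr expr0; apply: pgen1. Qed.

Let Jedge_off e p : ~~ side e -> Jedge pt src m s e p -> Jedge pt src m r e p.
Proof. by rewrite /Jedge /drop_edges => /negbTE ->. Qed.

Let side_corner e u : side e -> u \in e -> u \in [set g1; g2; g3].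
Proof.
by case/orP=> [/orP[]|] /eqP ->; rewrite ?E1 ?E2 ?E3 !inE => /orP[] ->; rewrite ?orbT.
Qed.

Let Jvert_off v p : v \notin [set g1; g2; g3] -> Jvert pt F src m s v p -> J v p.
Proof.
move=> nv; apply: Jvert_ext => e _ ve; rewrite /drop_edges ifF //.
by apply: contraNF nv => /side_corner; apply.
Qed.

Let corners_subspace : subspace corners.
Proof. by do 2?apply: subspace_subsum; apply: Jvert_subspace. Qed.

Definition corner_sum (c : {ffun V -> P}) : P := c g1 + c g2 + c g3.

Lemma corner_sum_bdry c : chains1 pt F src m s c -> corners (corner_sum (bdry F src c)).
Proof.
move=> hc; rewrite /corner_sum !bdryE hv1 hv2 hv3 -!big_split /=.
apply: (subspace_sum corners_subspace) => e ie; move: (hc e); rewrite ie.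
have se := orientation_src hO ie; have [de _] := dst_edge (interior_edge_card ie) se.
have [side_e _ | off_e /(Jedge_off off_e) hce] := boolP (side e).
  rewrite bdry_term_triangle //; first exact: subspace0 corners_subspace.
    exact: side_corner side_e se.
  exact: side_corner side_e de.
apply/subsum3E; exists (bdry_term src g1 e (c e)), (bdry_term src g2 e (c e)).
by exists (bdry_term src g3 e (c e)); split => //; apply: bdry_term_Jvert.
Qed.

Lemma corner_sum_kernel a : chains0 pt F src m s a -> corners (corner_sum a) ->
  H0_quot_den pt F src m r s a.
Proof.
move=> ha /subsum3E [j1 [j2 [j3 [hj1 hj2 hj3 ej]]]].
set d2 := a g2 - j2; set d3 := a g3 - j3.
have t2E : t2 = [set g1; g2] by rewrite E2 setUC.
(* c carries the excesses d3 and d2 from g3 and g2 back to g1 along t1 and t2. *)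
pose c := echain src g1 g3 d3 + echain src g1 g2 d2.
have hc : chains1 pt F src m s c.
  have sP := Pm_subspace R m.
  have Pd2 : Pm m d2.
    by apply: (subspaceB sP); [exact: chains0_Pm ha | exact: Jvert_Pm hj2].
  have Pd3 : Pm m d3.
    by apply: (subspaceB sP); [exact: chains0_Pm ha | exact: Jvert_Pm hj3].
  by apply: chains1D; apply: chains1_echain; rewrite -?E1 -?t2E //; apply: Jedge_side;
    rewrite ?eqxx ?orbT.
have bc v : bdry F src c v = if interior_vertex F v then
    (if v == g3 then d3 else 0) - (if v == g1 then d3 else 0)
    + ((if v == g2 then d2 else 0) - (if v == g1 then d2 else 0)) else 0.
  rewrite bdryD ffunE !bdry_echain -?E1 -?t2E ?(orientation_src hO) //.
  by case: ifP; rewrite ?addr0.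
exists (a - bdry F src c), (bdry F src c).
split; last by split; [exists c | rewrite subrK].
move=> v; have -> : (a - bdry F src c) v = a v - bdry F src c v by rewrite !ffunE.
rewrite bc; move: (ha v); case: ifP => iv; last by move=> ->; rewrite subr0.
have [-> _ | n1] := eqVneq v g1.
  rewrite !(negbTE d13, negbTE d12, eqxx) !sub0r -opprD opprK.
  have ag1 : a g1 = j1 + j2 + j3 - a g2 - a g3 by rewrite -ej /corner_sum; ring.
  by have -> : a g1 + (d3 + d2) = j1 by rewrite /d2 /d3 ag1; ring.
rewrite !subr0; have [-> _ | n2] := eqVneq v g2.
  by rewrite (negbTE d23) add0r /d2 opprB addrC subrK.
have [-> _ | n3] := eqVneq v g3.
  by rewrite addr0 /d3 opprB addrC subrK.
rewrite addr0 subr0; apply: Jvert_off.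
by rewrite !inE !negb_or n1 n2 n3.
Qed.

Lemma H0_quot_iso :
  quot_iso (H0_quot_num pt F src m s) (H0_quot_den pt F src m r s) (Pm m) corners.
Proof.
have sP := Pm_subspace R m.
exists corner_sum; split.
- by move=> k x y; rewrite /corner_sum !ffunE -!mul_mpolyC; ring.
- by move=> a ha; do 2?apply: (subspaceD sP); apply: chains0_Pm ha.
- move=> _ [a [_ [ha [[c [hc ->]] ->]]]].
  have -> : corner_sum (a + bdry F src c) = corner_sum a + corner_sum (bdry F src c).
    by rewrite /corner_sum !ffunE; ring.
  apply: (subspaceD corners_subspace); last exact: corner_sum_bdry.
  apply/subsum3E; exists (a g1), (a g2), (a g3).
  by move: (ha g1) (ha g2) (ha g3); rewrite hv1 hv2 hv3.
- exact: corner_sum_kernel.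
- move=> p hp; exists [ffun v => if v == g1 then p else 0]; split.
    move=> v; rewrite ffunE; have [-> | _] := eqVneq v g1.
      by rewrite hv1; apply: Jedge_Jvert hi1 g1t1 _; apply: Jedge_side; rewrite ?eqxx.
    by case: ifP => // _; apply: subspace0 (Jvert_subspace _ _ _ _ _ _).
  rewrite /corner_sum !ffunE eqxx (negbTE d21) (negbTE d31) !addr0 subrr.
  exact: subspace0 corners_subspace.
Qed.
End Triangle.

Theorem mainTheorem3
  (R : realFieldType) (V : finType) (pt : V -> 'rV[R]_2)
  (F : {set {set V}}) (src : {set V} -> V)
  (m : nat) (r0 : int) (r : {set V} -> int)
  (sigma t1 t2 t3 : {set V}) (g1 g2 g3 : V) (l1 l2 l3 : {mpoly R[2]})
  (hT : is_triangulation pt F) (hO : orientation F src)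
  (hr0 : -1 <= r0)
  (hr : forall e, interior_edge F e -> r e = r0 \/ r e = -1)
  (hsigma : sigma \in F)
  (ht1 : t1 \subset sigma) (ht2 : t2 \subset sigma) (ht3 : t3 \subset sigma)
  (hi1 : interior_edge F t1) (hi2 : interior_edge F t2) (hi3 : interior_edge F t3)
  (hrt1 : r t1 = r0) (hrt2 : r t2 = r0) (hrt3 : r t3 = r0)
  (hg1 : t1 :&: t2 = [set g1]) (hg2 : t2 :&: t3 = [set g2])
  (hg3 : t3 :&: t1 = [set g3])
  (hv1 : interior_vertex F g1) (hv2 : interior_vertex F g2)
  (hv3 : interior_vertex F g3)
  (hn1 : forall e, interior_edge F e -> g1 \in e -> r e != -1)
  (hn2 : forall e, interior_edge F e -> g2 \in e -> r e != -1)
  (hn3 : forall e, interior_edge F e -> g3 \in e -> r e != -1)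
  (hl1 : affine_form l1) (hl2 : affine_form l2) (hl3 : affine_form l3)
  (hz1 : forall v, v \in t1 -> peval l1 (pt v) = 0)
  (hz2 : forall v, v \in t2 -> peval l2 (pt v) = 0)
  (hz3 : forall v, v \in t3 -> peval l3 (pt v) = 0) :
  let s := drop_edges r t1 t2 t3 in
  let J1 := Jvert pt F src m r g1 in
  let J2 := Jvert pt F src m r g2 in
  let J3 := Jvert pt F src m r g3 in
  let Pm3 := triple (Pm m) (Pm m) (Pm m) in
  let target_num := Pm m in
  let target_den := subsum (subsum J1 J2) J3 in
  [/\ (* phi is well defined on the quotients *)
      (forall x, triple (pgen m (l1 ^+ absz (r0 + 1)))
                        (pgen m (l2 ^+ absz (r0 + 1)))
                        (pgen m (l3 ^+ absz (r0 + 1))) x ->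
                 triple J1 J2 J3 (phi_map x)),
      (* coker phi = (P_m^3) / (J1 + J2 + J3 (+) image phi) ~ P_m / (J1+J2+J3) *)
      quot_iso Pm3 (subsum (triple J1 J2 J3) (subimg (@phi_map R) Pm3))
               target_num target_den &
      (* H_0(I^s / I^r) ~ P_m / (J1 + J2 + J3) *)
      quot_iso (H0_quot_num pt F src m s) (H0_quot_den pt F src m r s)
               target_num target_den].
Proof.
(* The constraints hr0, hr, hn1-hn3 on the values of r are not needed here. *)
move=> s J1 J2 J3 Pm3 tn td.
case: hT => pt_inj hface _ _ _.
have [E1 E2 E3 [d13 d21 d32]] := triangle_edges (proj1 (hface _ hsigma))
  (interior_edge_card hi1) (interior_edge_card hi2) (interior_edge_card hi3)
  ht1 ht2 ht3 hg1 hg2 hg3.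
split.
- move=> x [h1 h2 h3]; rewrite -hrt1 in h1; rewrite -hrt2 in h2; rewrite -hrt3 in h3.
  apply: (phi_map_Jvert hi1 hi2 hi3 E1 E2 E3); split.
  + exact: Jedge_affine_form pt_inj hO hi1 hl1 hz1 h1.
  + exact: Jedge_affine_form pt_inj hO hi2 hl2 hz2 h2.
  + exact: Jedge_affine_form pt_inj hO hi3 hl3 hz3 h3.
- by apply: coker_phi_iso; try exact: Pm_subspace; try exact: Jvert_subspace;
    exact: Jvert_Pm.
- exact: H0_quot_iso.
Qed.
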